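(* Let $R$ be a ring with unity and involution $*$, and let $a\in R$. The following statements are equivalent. (1) $a$ is Moore-Penrose invertible. (2) $a$ is left dual $a^*$-core invertible. (3) $a^*$ is left dual $a$-core invertible. (4) $a$ is left dual $(a^*,a^* )$-core invertible. (5) $a$ is left $(a^*,a^* )$-invertible. (6) $a^*$ is left dual $(a,a)$-core invertible. (7) $a^*$ is left $(a,a)$-invertible.
   Context: $a$ is Moore-Penrose invertible if there exists $x\in R$ with $axa=a$, $xax=x$, $(ax)^*=ax$, $(xa)^*=xa$. For $u,v\in R$, $u$ is left dual $v$-core invertible if there exists $x\in R$ with $uxvu=u$, $(xvu)^*=xvu$ and $x^2vu=x$. For $u,b,c\in R$, $u$ is left dual $(b,c)$-core invertible if there exists $x\in Rc$ with $bxub=b$ and $(xub)^*=xub$; and $u$ is left $(b,c)$-invertible if $b\in Rcub$ (equivalently, there exists $x\in Rc$ with $xub=b$). *)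

From mathcomp Require Import all_boot all_algebra.
Set Implicit Arguments. Unset Strict Implicit. Unset Printing Implicit Defensive.
Import GRing.Theory.
Local Open Scope ring_scope.

Definition involution (R : pzRingType) (star : R -> R) : Prop :=
  [/\ forall x y : R, star (x + y) = star x + star y,
      forall x y : R, star (x * y) = star y * star x
    & forall x : R, star (star x) = x].

Definition MP_invertible (R : pzRingType) (star : R -> R) (a : R) : Prop :=
  exists x : R, [/\ a * x * a = a, x * a * x = x,
                    star (a * x) = a * x & star (x * a) = x * a].

Definition left_dual_core_invertible (R : pzRingType) (star : R -> R)
    (u v : R) : Prop :=
  exists x : R, [/\ u * x * v * u = u, star (x * v * u) = x * v * u
                  & x ^+ 2 * v * u = x].

Definition left_dual_bc_core_invertible (R : pzRingType) (star : R -> R)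
    (u b c : R) : Prop :=
  exists x : R, [/\ exists r : R, x = r * c,
                    b * x * u * b = b
                  & star (x * u * b) = x * u * b].

Definition left_bc_invertible (R : pzRingType) (u b c : R) : Prop :=
  exists r : R, b = r * c * u * b.

From mathcomp Require Import all_boot all_algebra.
Set Implicit Arguments. Unset Strict Implicit. Unset Printing Implicit Defensive.
Import GRing.Theory.
Local Open Scope ring_scope.

(* Every condition is equivalent to the Moore-Penrose invertibility of [a]
   or of [a^*], and these two coincide: if [x] is a Moore-Penrose inverse
   of [a], then [x^*] is one of [a^*].
   From a Moore-Penrose inverse [x] of [u], the elements [x x^*] and [x^* x]
   witness the two left dual core invertibilities, which in turn give
   [u^* = r u^* u u^*].  Conversely, such an [r] gives [u = u u^* u r^*],
   hence the {1,4}-inverse [r u^*] of [u]; then [u = (u r) u^* u] gives the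
   {1,3}-inverse [r^* u^*], and [r u^* u r^* u^*] is the Moore-Penrose
   inverse. *)

Lemma left_dual_bc_core_left_bc (R : pzRingType) (star : R -> R) (u b c : R) :
  left_dual_bc_core_invertible star u b c -> left_bc_invertible u b c.
Proof. by case=> x [[r ->] bxub _]; exists (b * r); rewrite -{1}bxub !mulrA. Qed.

Section AntiInvolution.

Variables (R : pzRingType) (star : R -> R).
Hypothesis starM : forall x y : R, star (x * y) = star y * star x.
Hypothesis starK : involutive star.

Definition inverse13 (u z : R) := u * z * u = u /\ star (u * z) = u * z.
Definition inverse14 (u y : R) := u * y * u = u /\ star (y * u) = y * u.

Lemma MP_invertible_star (u : R) :
  MP_invertible star u -> MP_invertible star (star u).
Proof.
case=> x [uxu xux hux hxu]; exists (star x); split.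
- by rewrite -!starM !mulrA uxu.
- by rewrite -!starM !mulrA xux.
- by rewrite -starM starK hxu.
- by rewrite -starM starK hux.
Qed.

Lemma MP_invertible_starE (u : R) :
  MP_invertible star (star u) <-> MP_invertible star u.
Proof.
split; last exact: MP_invertible_star.
by move/MP_invertible_star; rewrite starK.
Qed.

Lemma MP_invertible_of_inverse13_14 (u y z : R) :
  inverse14 u y -> inverse13 u z -> MP_invertible star u.
Proof.
move=> [uyu hyu] [uzu huz]; exists (y * u * z); split.
- by rewrite !mulrA uyu uzu.
- by rewrite !mulrA -(mulrA y u z) -(mulrA y (u * z) u) uzu
    -(mulrA y u y) -(mulrA y (u * y) u) uyu mulrA.
- by rewrite !mulrA uyu.
- by rewrite -!mulrA (mulrA u z) uzu.
Qed.

Lemma inverse13_of_lfactor (u w : R) :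
  u = w * star u * u -> inverse13 u (star w).
Proof.
move=> uwu.
have ustar : star u = star u * (u * star w) by rewrite {1}uwu !starM starK.
have uw : u * star w = w * star u by rewrite {1}uwu -!mulrA -ustar.
split; first by rewrite uw -uwu.
by rewrite uw starM starK uw.
Qed.

Lemma inverse14_of_rfactor (u w : R) :
  u = u * star u * w -> inverse14 u (star w).
Proof.
move=> uuw.
have ustar : star u = star w * (u * star u) by rewrite {1}uuw !starM starK.
have wu : star w * u = star u * w by rewrite {1}uuw mulrA -ustar.
split; first by rewrite -mulrA wu mulrA -uuw.
by rewrite wu starM starK wu.
Qed.

Lemma MP_left_dual_core (u : R) :
  MP_invertible star u -> left_dual_core_invertible star u (star u).
Proof.
case=> x [uxu xux hux hxu].
have xxuu : x * (star x * (star u * u)) = x * u.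
  by rewrite (mulrA (star x)) -starM hux !mulrA xux.
have xsxu : star x * (x * u) = star x by rewrite -hxu -starM xux.
exists (x * star x); split.
- by rewrite -!mulrA xxuu mulrA uxu.
- by rewrite -!mulrA xxuu hxu.
- by rewrite expr2 -!mulrA xxuu xsxu.
Qed.

Lemma left_dual_core_left_bc (u : R) :
  left_dual_core_invertible star u (star u) ->
  left_bc_invertible u (star u) (star u).
Proof.
case=> x [uxuu hxuu _]; exists x.
by rewrite -{1}uxuu -hxuu !starM starK !mulrA.
Qed.

Lemma MP_left_dual_bc_core (u : R) :
  MP_invertible star u ->
  left_dual_bc_core_invertible star u (star u) (star u).
Proof.
case=> x [uxu xux hux hxu].
have xxuu : star x * (x * (u * star u)) = u * x.
  by rewrite (mulrA x) -hxu -!starM !mulrA uxu hux.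
exists (star x * x); split.
- exists (star x * x * star x).
  by rewrite -!mulrA -starM hux (mulrA x) xux.
- by rewrite -!mulrA xxuu -hux -starM uxu.
- by rewrite -!mulrA xxuu hux.
Qed.

Lemma left_bc_MP (u : R) :
  left_bc_invertible u (star u) (star u) -> MP_invertible star u.
Proof.
case=> r ru.
have u_rfactor : u = u * star u * (u * star r).
  by rewrite -{1}[u]starK {1}ru !starM starK !mulrA.
have [uru hru] := inverse14_of_rfactor u_rfactor.
rewrite starM starK in uru hru.
have u_lfactor : u = u * r * star u * u by rewrite -(mulrA u r) uru.
exact: MP_invertible_of_inverse13_14 (conj uru hru)
  (inverse13_of_lfactor u_lfactor).
Qed.

Lemma MP_left_dual_coreP (u : R) :
  MP_invertible star u <-> left_dual_core_invertible star u (star u).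
Proof.
split; first exact: MP_left_dual_core.
by move/left_dual_core_left_bc/left_bc_MP.
Qed.

Lemma MP_left_dual_bc_coreP (u : R) :
  MP_invertible star u <->
  left_dual_bc_core_invertible star u (star u) (star u).
Proof.
split; first exact: MP_left_dual_bc_core.
by move/left_dual_bc_core_left_bc/left_bc_MP.
Qed.

Lemma MP_left_bcP (u : R) :
  MP_invertible star u <-> left_bc_invertible u (star u) (star u).
Proof.
split; last exact: left_bc_MP.
by move/MP_left_dual_bc_core/left_dual_bc_core_left_bc.
Qed.

End AntiInvolution.

Theorem theorem3p10 (R : pzRingType) (star : R -> R)
    (Hstar : involution star) (a : R) :
  [<-> MP_invertible star a;
       left_dual_core_invertible star a (star a);
       left_dual_core_invertible star (star a) a;
       left_dual_bc_core_invertible star a (star a) (star a);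
       left_bc_invertible a (star a) (star a);
       left_dual_bc_core_invertible star (star a) a a;
       left_bc_invertible (star a) a a].
Proof.
case: Hstar => _ starM starK.
have MPK := MP_invertible_starE starM starK a.
have ldc := MP_left_dual_coreP starM starK a.
have ldc' := MP_left_dual_coreP starM starK (star a).
have ldbc := MP_left_dual_bc_coreP starM starK a.
have ldbc' := MP_left_dual_bc_coreP starM starK (star a).
have lbc := MP_left_bcP starM starK a.
have lbc' := MP_left_bcP starM starK (star a).
rewrite starK in ldc' ldbc' lbc'.
tfae.
- by move/ldc.
- by move/ldc/MPK/ldc'.
- by move/ldc'/MPK/ldbc.
- by move/ldbc/lbc.
- by move/lbc/MPK/ldbc'.
- by move/ldbc'/lbc'.
- by move/lbc'/MPK.
Qed.
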